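(* Fix integers $m\ge3$ and $n\ge2$. The cycle $C_m$ and the path $P_n$ are strongly disjoint if and only if $m$ is odd and $\gcd(m,n-1)=1$.
   Context: A weight function on finite $U$ is $\alpha:U\times U\to\mathbb{R}$, $\alpha\ge0$, symmetric, summing to $1$; degree $p(u)=\sum_{u'}\alpha(u,u')$; a graph is $(U,\alpha)$. $C_k$ ($k\ge3$) is the cycle on vertices $u_1,\dots,u_k$ with $\alpha(u_i,u_{i\pm1})=1/(2k)$ (indices mod $k$) and all other weights $0$. $P_k$ ($k\ge2$) is the path on $u_1,\dots,u_k$ with $\alpha(u_i,u_{i+1})=\alpha(u_{i+1},u_i)=1/(2(k-1))$ and all other weights $0$. For graphs $(U,\alpha)$, $(V,\beta)$ with degrees $p,q$, a weight joining is a weight function $\gamma$ on $U\times V$ with degree $r(u,v)=\sum_{(u',v')}\gamma((u,v),(u',v'))$ such that $\sum_v r(u,v)=p(u)$, $\sum_u r(u,v)=q(v)$, $p(u)\sum_{\tilde v}\gamma((u,v),(u',\tilde v))=\alpha(u,u')r(u,v)$ and $q(v)\sum_{\tilde u}\gamma((u,v),(\tilde u,v'))=\beta(v,v')r(u,v)$ for all $u,u',v,v'$. The graphs are strongly disjoint if the only weight joining is $\alpha\otimes\beta$, $(\alpha\otimes\beta)((u,v),(u',v'))=\alpha(u,u')\beta(v,v')$. *)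

From HB Require Import structures.
From mathcomp Require Import all_boot all_order all_algebra.
From mathcomp Require Import reals.
Set Implicit Arguments. Unset Strict Implicit. Unset Printing Implicit Defensive.
Import Order.TTheory GRing.Theory Num.Theory.
Local Open Scope ring_scope.

Section Defs.
Variable R : realType.

Definition weight_fun (U : finType) (a : U -> U -> R) : Prop :=
  (forall u u', 0 <= a u u') /\ (forall u u', a u u' = a u' u) /\
  \sum_(u : U) \sum_(u' : U) a u u' = 1.

Definition deg (U : finType) (a : U -> U -> R) (u : U) : R :=
  \sum_(u' : U) a u u'.

(* cycle C_m on vertices 'I_m (u_{i+1} <-> i), weights 1/(2m) between i and i+1 mod m *)
Definition cycle_w (m : nat) : 'I_m -> 'I_m -> R :=
  fun i j => if ((i.+1 %% m)%N == j) || ((j.+1 %% m)%N == i)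
             then (2 * m%:R)^-1 else 0.

Definition path_w (n : nat) : 'I_n -> 'I_n -> R :=
  fun i j => if (i.+1 == j :> nat) || (j.+1 == i :> nat)
             then (2 * (n - 1)%:R)^-1 else 0.

Definition product_w (U V : finType) (a : U -> U -> R) (b : V -> V -> R)
  : U * V -> U * V -> R := fun x y => a x.1 y.1 * b x.2 y.2.

Definition weight_joining (U V : finType) (a : U -> U -> R) (b : V -> V -> R)
  (g : U * V -> U * V -> R) : Prop :=
  weight_fun g /\
  (forall u, \sum_(v : V) deg g (u, v) = deg a u) /\
  (forall v, \sum_(u : U) deg g (u, v) = deg b v) /\
  (forall u v u', deg a u * \sum_(v' : V) g (u, v) (u', v') = a u u' * deg g (u, v)) /\
  (forall u v v', deg b v * \sum_(u' : U) g (u, v) (u', v') = b v v' * deg g (u, v)).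

Definition strongly_disjoint (U V : finType) (a : U -> U -> R) (b : V -> V -> R) : Prop :=
  forall g, weight_joining a b g -> g = product_w a b.

End Defs.

Arguments cycle_w : clear implicits.
Arguments path_w : clear implicits.

From HB Require Import structures.
From mathcomp Require Import all_boot all_order all_algebra.
From mathcomp Require Import reals trigo.
From mathcomp Require Import ring lra zify.
Set Implicit Arguments. Unset Strict Implicit. Unset Printing Implicit Defensive.
Import Order.TTheory GRing.Theory Num.Theory.
Local Open Scope ring_scope.

(* Both obstructions are explicit perturbations of the product joining. If m is even, the
   alternating signs on C_m and P_n multiply to a function that is constant along the edges of
   the product, and (1 + that function) times the product weight is again a joining. If some
   d >= 3 divides m and n - 1, then k |-> cos (2 pi k / d) is an eigenfunction of both graphs
   for the same eigenvalue cos (2 pi / d) <> +-1, and a perturbation quadratic in these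
   eigenfunctions is a joining.
   Conversely, the joining axioms make G(u, k) = r(u, k) / q(k), the degree of a joining
   divided by the degree in P_n, a solution of the discrete wave equation on Z_m x {0, .., n-1}
   with reflecting ends. By d'Alembert's formula G is determined by its profile at k = 0, the
   reflection at k = n - 1 makes this profile 2(n-1)-periodic, and as m is odd and prime to
   n - 1 it is constant: the joining has the degrees of the product. Walking along the path,
   each row of the deviation from the product then has at most one unknown entry and sums to
   zero, so the joining is the product. *)

Lemma normr_mul_le1 (R : numDomainType) (x y : R) : `|x| <= 1 -> `|y| <= 1 -> `|x * y| <= 1.
Proof. by move=> x1 y1; rewrite normrM mulr_ile1. Qed.

Section Eigenfunctions.
Variables (R : realType) (T : finType) (b : T -> T -> R).
Hypothesis bS : forall t t', b t t' = b t' t.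

Definition eigenfun (l : R) (f : T -> R) :=
  forall t, \sum_(t' : T) b t t' * f t' = l * deg b t * f t.

Lemma sum_deg_eigenfun l f : eigenfun l f -> l != 1 -> \sum_(t : T) deg b t * f t = 0.
Proof.
move=> ef l1.
have : l * \sum_(t : T) deg b t * f t = \sum_(t : T) deg b t * f t.
  rewrite mulr_sumr; under eq_bigr do rewrite mulrA -ef.
  rewrite exchange_big /=; apply: eq_bigr => t' _.
  by rewrite /deg mulr_suml; apply: eq_bigr => t _; rewrite bS.
move/eqP; rewrite -subr_eq0 -{2}[\sum_t _]mul1r -mulrBl mulf_eq0 subr_eq0.
by rewrite (negbTE l1) => /eqP.
Qed.

Lemma bipartite_sign_eigenfun (chi : T -> R) :
  (forall t t', b t t' != 0 -> chi t' = - chi t) -> eigenfun (-1) chi.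
Proof.
move=> flip t; rewrite mulN1r mulNr -mulrN /deg mulr_suml; apply: eq_bigr => t' _.
by have [->|/flip ->] := eqVneq (b t t') 0; rewrite ?mul0r.
Qed.

End Eigenfunctions.

Section Joinings.
Variables (R : realType) (U V : finType) (a : U -> U -> R) (b : V -> V -> R).

Lemma deg_pair (g : U * V -> U * V -> R) x :
  deg g x = \sum_(u' : U) \sum_(v' : V) g x (u', v').
Proof. by rewrite /deg pair_big /=; apply: eq_bigr => -[]. Qed.

Lemma deg_product_w x : deg (product_w a b) x = deg a x.1 * deg b x.2.
Proof.
rewrite deg_pair /product_w /= mulr_suml; apply: eq_bigr => u' _.
by rewrite mulr_sumr.
Qed.

Hypotheses (aS : forall u u', a u u' = a u' u) (bS : forall v v', b v v' = b v' v).
Hypotheses (sum_deg_a : \sum_(u : U) deg a u = 1) (sum_deg_b : \sum_(v : V) deg b v = 1).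

Section Perturbation.
Variables (G : U * V -> U * V -> R) (rho : U * V -> R).
Hypotheses (G_ge0 : forall x y, 0 <= G x y) (G_sym : forall x y, G x y = G y x).
Hypothesis G_rowU :
  forall u v u', \sum_(v' : V) G (u, v) (u', v') = a u u' * deg b v * rho (u, v).
Hypothesis G_rowV :
  forall u v v', \sum_(u' : U) G (u, v) (u', v') = b v v' * deg a u * rho (u, v).
Hypotheses (rho_sumU : forall u, \sum_(v : V) deg b v * rho (u, v) = 1)
  (rho_sumV : forall v, \sum_(u : U) deg a u * rho (u, v) = 1).

Lemma deg_perturbation u v : deg G (u, v) = deg a u * deg b v * rho (u, v).
Proof. by rewrite deg_pair (eq_bigr _ (fun u' _ => G_rowU u v u')) -!mulr_suml. Qed.

Lemma perturbation_weight_joining : weight_joining a b G.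
Proof.
have sum_v u : \sum_(v : V) deg G (u, v) = deg a u.
  rewrite -[RHS]mulr1 -(rho_sumU u) mulr_sumr; apply: eq_bigr => v _.
  by rewrite deg_perturbation mulrA.
do !split=> //.
- rewrite -sum_deg_a -(eq_bigr _ (fun u _ => sum_v u)) [RHS]pair_big /=.
  by apply: eq_bigr => -[].
- move=> v; rewrite -[RHS]mulr1 -(rho_sumV v) mulr_sumr; apply: eq_bigr => u _.
  by rewrite deg_perturbation; ring.
- by move=> u v u'; rewrite G_rowU deg_perturbation; ring.
- by move=> u v v'; rewrite G_rowV deg_perturbation; ring.
Qed.

Lemma perturbation_not_strongly_disjoint u0 v0 :
  deg a u0 != 0 -> deg b v0 != 0 -> rho (u0, v0) != 1 -> ~ strongly_disjoint a b.
Proof.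
move=> pu0 qv0 rho1 /(_ G perturbation_weight_joining) GE.
have := deg_perturbation u0 v0; rewrite GE deg_product_w /= => e.
by apply/(negP rho1)/eqP/(mulfI (mulf_neq0 pu0 qv0)); rewrite mulr1 -e.
Qed.

End Perturbation.

Hypotheses (a_ge0 : forall u u', 0 <= a u u') (b_ge0 : forall v v', 0 <= b v v').

Lemma product_w_ge0 x y : 0 <= product_w a b x y.
Proof. exact: mulr_ge0. Qed.

Lemma product_w_sym x y : product_w a b x y = product_w a b y x.
Proof. by rewrite /product_w aS bS. Qed.

Lemma not_strongly_disjoint_of_signs (chiU : U -> R) (chiV : V -> R) u0 v0 :
  (forall u, `|chiU u| <= 1) -> (forall v, `|chiV v| <= 1) ->
  (forall u u', a u u' != 0 -> chiU u' = - chiU u) ->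
  (forall v v', b v v' != 0 -> chiV v' = - chiV v) ->
  chiU u0 * chiV v0 != 0 -> deg a u0 != 0 -> deg b v0 != 0 ->
  ~ strongly_disjoint a b.
Proof.
move=> chiU1 chiV1 flipU flipV chi0 pu0 qv0.
have N1_neq1 : (-1 : R) != 1 by rewrite lt_eqF // (lt_trans (ltrN10 R) ltr01).
pose rho (x : U * V) := 1 + chiU x.1 * chiV x.2.
apply: (@perturbation_not_strongly_disjoint
  (fun x y => product_w a b x y * rho x) rho _ _ _ _ _ _ u0 v0) => //.
- move=> x y; rewrite mulr_ge0 ?product_w_ge0 // /rho.
  by move: (normr_mul_le1 (chiU1 x.1) (chiV1 x.2)); rewrite ler_norml; lra.
- move=> [u v] [u' v']; rewrite product_w_sym /product_w /=.
  have [->|au] := eqVneq (a u' u) 0; first by rewrite !mul0r.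
  have [->|bv] := eqVneq (b v' v) 0; first by rewrite mulr0 !mul0r.
  by rewrite /rho /= (flipU _ _ au) (flipV _ _ bv) mulrNN.
- by move=> u v u'; rewrite /product_w /= -mulr_suml -mulr_sumr.
- move=> u v v'; rewrite /product_w /= -mulr_suml.
  by congr (_ * _); rewrite -mulr_suml mulrC.
- move=> u; under eq_bigr do rewrite mulrDr mulr1 mulrCA.
  rewrite big_split /= sum_deg_b -mulr_sumr.
  by rewrite (sum_deg_eigenfun bS (bipartite_sign_eigenfun flipV)) // mulr0 addr0.
- move=> v; under eq_bigr do rewrite mulrDr mulr1 mulrA.
  rewrite big_split /= sum_deg_a -mulr_suml.
  by rewrite (sum_deg_eigenfun aS (bipartite_sign_eigenfun flipU)) // mul0r addr0.
- by rewrite /rho -subr_eq0 addrAC subrr add0r.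
Qed.

Lemma not_strongly_disjoint_of_eigenfuns (f : U -> R) (g : V -> R) (l : R) u0 v0 :
  (forall u, `|f u| <= 1) -> (forall v, `|g v| <= 1) -> `|l| < 1 ->
  eigenfun a l f -> eigenfun b l g ->
  f u0 * g v0 != 0 -> deg a u0 != 0 -> deg b v0 != 0 ->
  ~ strongly_disjoint a b.
Proof.
move=> f1 g1 l1 ef eg fg0 pu0 qv0.
have l_neq1 : l != 1 by apply: contraTneq l1 => ->; rewrite normr1 ltxx.
(* The [l]-terms are chosen so that, by the eigenvalue equations, the row sums of the
   weight only depend on the source vertex. *)
pose c (x y : U * V) :=
  1 + (f x.1 * g x.2 + f y.1 * g y.2 - l * (f x.1 * g y.2 + f y.1 * g x.2)) / 4.
pose rho (x : U * V) := 1 + (1 - l ^+ 2) * (f x.1 * g x.2) / 4.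
apply: (@perturbation_not_strongly_disjoint
  (fun x y => product_w a b x y * c x y) rho _ _ _ _ _ _ u0 v0) => //.
- move=> x y; rewrite mulr_ge0 ?product_w_ge0 // /c.
  have l1' := ltW l1.
  move: (normr_mul_le1 (f1 x.1) (g1 x.2)) (normr_mul_le1 (f1 y.1) (g1 y.2)).
  move: (normr_mul_le1 l1' (normr_mul_le1 (f1 x.1) (g1 y.2))).
  move: (normr_mul_le1 l1' (normr_mul_le1 (f1 y.1) (g1 x.2))).
  rewrite !ler_norml; lra.
- by move=> x y; rewrite product_w_sym /c; congr (_ * (1 + _ / 4)); ring.
- move=> u v u'; rewrite /product_w /c /=.
  have -> : \sum_(v' : V) a u u' * b v v' *
        (1 + (f u * g v + f u' * g v' - l * (f u * g v' + f u' * g v)) / 4) =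
      a u u' * (1 + (f u * g v - l * f u' * g v) / 4) * deg b v
      + a u u' * ((f u' - l * f u) / 4) * \sum_(v' : V) b v v' * g v'.
    by rewrite /deg !mulr_sumr -big_split /=; apply: eq_bigr => v' _; ring.
  by rewrite eg /rho /=; ring.
- move=> u v v'; rewrite /product_w /c /=.
  have -> : \sum_(u' : U) a u u' * b v v' *
        (1 + (f u * g v + f u' * g v' - l * (f u * g v' + f u' * g v)) / 4) =
      b v v' * (1 + (f u * g v - l * f u * g v') / 4) * deg a u
      + b v v' * ((g v' - l * g v) / 4) * \sum_(u' : U) a u u' * f u'.
    by rewrite /deg !mulr_sumr -big_split /=; apply: eq_bigr => u' _; ring.
  by rewrite ef /rho /=; ring.
- move=> u; rewrite /rho /=.
  have -> : \sum_(v : V) deg b v * (1 + (1 - l ^+ 2) * (f u * g v) / 4) =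
      \sum_(v : V) deg b v + (1 - l ^+ 2) * f u / 4 * \sum_(v : V) deg b v * g v.
    by rewrite mulr_sumr -big_split /=; apply: eq_bigr => v _; ring.
  by rewrite sum_deg_b (sum_deg_eigenfun bS eg l_neq1) mulr0 addr0.
- move=> v; rewrite /rho /=.
  have -> : \sum_(u : U) deg a u * (1 + (1 - l ^+ 2) * (f u * g v) / 4) =
      \sum_(u : U) deg a u + (1 - l ^+ 2) * g v / 4 * \sum_(u : U) deg a u * f u.
    by rewrite mulr_sumr -big_split /=; apply: eq_bigr => u _; ring.
  by rewrite sum_deg_a (sum_deg_eigenfun aS ef l_neq1) mulr0 addr0.
- rewrite /rho /= -subr_eq0 addrAC subrr add0r mulf_neq0 ?invr_eq0 ?pnatr_eq0 //.
  rewrite mulf_neq0 // subr_eq0 eq_sym sqrf_eq1 negb_or l_neq1 /=.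
  by apply: contraTneq l1 => ->; rewrite normrN normr1 ltxx.
Qed.

Section Rigidity.
Variable g : U * V -> U * V -> R.
Hypothesis gJ : weight_joining a b g.
Hypotheses (deg_a_neq0 : forall u, deg a u != 0) (deg_b_neq0 : forall v, deg b v != 0).

Lemma joining_deg_balance u0 v0 :
  \sum_(v : V) b v0 v * (deg g (u0, v) / deg b v) =
  \sum_(u : U) a u0 u * (deg g (u, v0) / deg a u).
Proof.
have [[_ [g_sym _]] [_ [_ [g_rowU g_rowV]]]] := gJ.
have rowV v : b v0 v * (deg g (u0, v) / deg b v) = \sum_(u : U) g (u0, v) (u, v0).
  by rewrite bS mulrA -g_rowV mulrC mulrA mulVf ?mul1r.
have rowU u : a u0 u * (deg g (u, v0) / deg a u) = \sum_(v : V) g (u, v0) (u0, v).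
  by rewrite aS mulrA -g_rowU mulrC mulrA mulVf ?mul1r.
rewrite (eq_bigr _ (fun v _ => rowV v)) exchange_big /=.
by apply: eq_bigr => u _; rewrite rowU; apply: eq_bigr => v _; rewrite g_sym.
Qed.

Lemma joining_eq_product (lv : V -> nat) :
  (forall u v, deg g (u, v) = deg a u * deg b v) ->
  (forall v v', b v v' != 0 -> lv v' = (lv v).+1 \/ lv v = (lv v').+1) ->
  injective lv -> g = product_w a b.
Proof.
move=> g_deg b_lv lv_inj; have [[_ [g_sym _]] [_ [_ [g_rowU g_rowV]]]] := gJ.
pose dev x y := g x y - product_w a b x y.
have dev_sym x y : dev x y = dev y x by rewrite /dev g_sym product_w_sym.
have dev_off u v u' v' : b v v' = 0 -> dev (u, v) (u', v') = 0.
  move=> b0; rewrite /dev /product_w /= b0 mulr0 subr0.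
  have /eqP := g_rowV u v v'; rewrite b0 mul0r mulf_eq0 (negbTE (deg_b_neq0 v)) /=.
  by move/eqP/psumr_eq0P; apply=> // w _; case: gJ => -[].
have dev_row u v u' : \sum_(v' : V) dev (u, v) (u', v') = 0.
  rewrite /dev sumrB /product_w /= -mulr_sumr.
  have := g_rowU u v u'; rewrite g_deg mulrCA => /(mulfI (deg_a_neq0 u)) ->.
  by rewrite subrr.
suff dev0 k v : (lv v < k)%N -> forall u u' v', dev (u, v) (u', v') = 0.
  apply: boolp.funext => -[u v]; apply: boolp.funext => -[u' v'].
  by apply/eqP; rewrite -subr_eq0; apply/eqP/(dev0 (lv v).+1).
elim: k v => [//|k IH] v; rewrite ltnS leq_eqVlt => /orP [/eqP lvk|]; last exact: IH.
have dev_nonsucc u u' v' : lv v' != k.+1 -> dev (u, v) (u', v') = 0.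
  move=> lv'k; have [b0|/b_lv [lv'|lv']] := eqVneq (b v v') 0; first exact: dev_off.
    by rewrite lv' lvk eqxx in lv'k.
  by rewrite dev_sym IH // -lvk lv'.
move=> u u' v'; have [lv'|] := eqVneq (lv v') k.+1; last exact: dev_nonsucc.
have := dev_row u v u'; rewrite (bigD1 v') //= big1 ?addr0 // => w wv'.
by apply: dev_nonsucc; rewrite -lv'; apply: contra wv' => /eqP/lv_inj ->.
Qed.

End Rigidity.
End Joinings.

Section CycleWeights.
Variable R : realType.

Lemma cycle_w_sym m (i j : 'I_m) : cycle_w R m i j = cycle_w R m j i.
Proof. by rewrite /cycle_w orbC. Qed.

Lemma cycle_w_ge0 m (i j : 'I_m) : 0 <= cycle_w R m i j.
Proof. by rewrite /cycle_w; case: ifP; rewrite // invr_ge0 mulr_ge0 ?ler0n. Qed.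

Variable m' : nat.
Local Notation m := m'.+3.

Lemma cycle_wE (i j : 'I_m) :
  cycle_w R m i j = if (j == i + 1) || (j == i - 1) then (2 * m%:R)^-1 else 0.
Proof.
have succE (x y : 'I_m) : ((x.+1 %% m)%N == y) = (y == x + 1).
  by rewrite eq_sym -val_eqE /= addn1.
by rewrite /cycle_w !succE [j == i - 1]eq_sym subr_eq.
Qed.

Lemma cycle_w_neq0 (i j : 'I_m) : cycle_w R m i j != 0 -> (j == i + 1) || (j == i - 1).
Proof. by rewrite cycle_wE; case: ifP; rewrite ?eqxx. Qed.

Lemma sum_cycle_w_mul (i : 'I_m) (h : 'I_m -> R) :
  \sum_(j : 'I_m) cycle_w R m i j * h j = (2 * m%:R)^-1 * (h (i + 1) + h (i - 1)).
Proof.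
have i_pm : i - 1 != i + 1.
  by rewrite eq_sym -subr_eq0 (_ : i + 1 - (i - 1) = 1 + 1) //; ring.
rewrite (bigD1 (i + 1)) //= (bigD1 (i - 1)) //= big1 ?addr0.
  by rewrite !cycle_wE !eqxx !orbT /= -mulrDr.
by move=> j /andP [j1 j2]; rewrite cycle_wE (negbTE j1) (negbTE j2) mul0r.
Qed.

Lemma deg_cycle_w (i : 'I_m) : deg (cycle_w R m) i = (m%:R)^-1.
Proof.
rewrite /deg -(eq_bigr _ (fun j _ => mulr1 (cycle_w R m i j))) sum_cycle_w_mul.
by rewrite invfM mulrAC -mulr2n -mulr_natr mulVf ?mul1r ?pnatr_eq0.
Qed.

Lemma deg_cycle_w_neq0 (i : 'I_m) : deg (cycle_w R m) i != 0.
Proof. by rewrite deg_cycle_w invr_eq0 pnatr_eq0. Qed.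

Lemma sum_deg_cycle_w : \sum_(i : 'I_m) deg (cycle_w R m) i = 1.
Proof.
rewrite (eq_bigr _ (fun i _ => deg_cycle_w i)) sumr_const card_ord.
by rewrite -[LHS]mulr_natr mulVf ?pnatr_eq0.
Qed.

End CycleWeights.

Section PathWeights.
Variables (R : realType) (n : nat).
Local Notation c := (2 * (n - 1)%:R : R)^-1.

Lemma path_w_sym (i j : 'I_n) : path_w R n i j = path_w R n j i.
Proof. by rewrite /path_w orbC. Qed.

Lemma path_w_ge0 (i j : 'I_n) : 0 <= path_w R n i j.
Proof. by rewrite /path_w; case: ifP; rewrite // invr_ge0 mulr_ge0 ?ler0n. Qed.

Lemma path_w_neq0 (i j : 'I_n) :
  path_w R n i j != 0 -> j = i.+1 :> nat \/ i = j.+1 :> nat.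
Proof. by rewrite /path_w; case: ifP => [/orP [] /eqP|]; rewrite ?eqxx; auto. Qed.

Lemma path_wE (i j : 'I_n) :
  path_w R n i j = c * ((j == i.+1 :> nat)%:R + (i == j.+1 :> nat)%:R).
Proof.
rewrite /path_w [i.+1 == _]eq_sym [j.+1 == _]eq_sym.
case: (nat_of_ord j =P i.+1) => [ji|_]; case: (nat_of_ord i =P j.+1) => [ij|_] /=.
- by exfalso; lia.
- by rewrite addr0 mulr1.
- by rewrite add0r mulr1.
- by rewrite addr0 mulr0.
Qed.

Lemma sum_ord_nat_pred1 (k : nat) (h : nat -> R) :
  \sum_(j : 'I_n) (j == k :> nat)%:R * h j = (k < n)%:R * h k.
Proof.
have [kn|nk] := ltnP k n; last first.
  rewrite mul0r big1 // => j _.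
  by rewrite ltn_eqF ?mul0r // (leq_trans (ltn_ord j)).
rewrite (bigD1 (Ordinal kn)) //= eqxx mul1r big1 ?addr0 // => j jk.
by rewrite (_ : (j == k :> nat) = false) ?mul0r //; apply: negbTE.
Qed.

Lemma sum_path_w_mul (i : 'I_n) (h : nat -> R) :
  \sum_(j : 'I_n) path_w R n i j * h j =
  c * ((i.+1 < n)%:R * h i.+1 + (0 < i)%:R * h i.-1).
Proof.
under eq_bigr do rewrite path_wE -mulrA.
rewrite -mulr_sumr; under eq_bigr do rewrite mulrDl.
rewrite big_split /= sum_ord_nat_pred1; congr (_ * (_ + _)).
case: i => [[|i] lt_in] /=; first by rewrite big1 ?mul0r // => j _; rewrite mul0r.
under eq_bigr do rewrite eqSS eq_sym.
by rewrite sum_ord_nat_pred1 (ltnW lt_in).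
Qed.

Lemma deg_path_w (i : 'I_n) : deg (path_w R n) i = c * ((i.+1 < n)%:R + (0 < i)%:R).
Proof.
rewrite /deg -(eq_bigr _ (fun j _ => mulr1 (path_w R n i j))).
by rewrite (sum_path_w_mul i (fun=> 1)) !mulr1.
Qed.

Hypothesis n_ge2 : (2 <= n)%N.

Lemma deg_path_w_gt0 (i : 'I_n) : 0 < deg (path_w R n) i.
Proof.
rewrite deg_path_w mulr_gt0 ?invr_gt0 ?mulr_gt0 ?ltr0n ?subn_gt0 //.
case: i => [[|i] lt_in] /=; first by rewrite addr0 ltr0n n_ge2.
by rewrite ltr_wpDl ?ler0n ?ltr01.
Qed.

Lemma sum_deg_path_w : \sum_(i : 'I_n) deg (path_w R n) i = 1.
Proof.
under eq_bigr do rewrite deg_path_w.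
rewrite -mulr_sumr big_split /=; case: n n_ge2 => [|[|N]] // _.
rewrite big_ord_recr [X in _ + X]big_ord_recl /= ltnn addr0 add0r.
under eq_bigr do rewrite ltnS ltn_ord.
rewrite !sumr_const card_ord subn1 /=; field.
by rewrite nat1r pnatr_eq0.
Qed.

End PathWeights.

Section DAlembert.
Variables (R : realType) (Z : zmodType) (s : Z) (G : Z -> nat -> R) (N : nat).
Hypothesis wave_start : forall u, 2 * G u 1 = G (u + s) 0 + G (u - s) 0.
Hypothesis wave_inner : forall u k, (k.+2 <= N)%N ->
  G u k.+2 + G u k = G (u + s) k.+1 + G (u - s) k.+1.

Lemma dalembert k : (k <= N)%N ->
  forall u, G u k = (G (u + s *+ k) 0 + G (u - s *+ k) 0) / 2.
Proof.
pose P k := forall u, G u k = (G (u + s *+ k) 0 + G (u - s *+ k) 0) / 2.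
suff P2 j : (j.+1 <= N)%N -> P j /\ P j.+1.
  by case: k => [_ u|k /P2 []//]; rewrite mulr0n addr0 subr0; field.
elim: j => [_|j IH jN].
  by split=> u; rewrite ?mulr0n ?addr0 ?subr0 ?mulr1n -?wave_start; field.
have [Pj Pj1] := IH (ltnW jN); split=> // u.
have -> : G u j.+2 = G (u + s) j.+1 + G (u - s) j.+1 - G u j.
  by rewrite -wave_inner // addrK.
have e1 : u + s + s *+ j.+1 = u + s *+ j.+2 by rewrite [s *+ j.+2]mulrS addrA.
have e2 : u + s - s *+ j.+1 = u - s *+ j by rewrite mulrS opprD addrA addrK.
have e3 : u - s + s *+ j.+1 = u + s *+ j by rewrite mulrS addrA subrK.
have e4 : u - s - s *+ j.+1 = u - s *+ j.+2 by rewrite [s *+ j.+2]mulrS opprD addrA.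
by rewrite !Pj1 Pj e1 e2 e3 e4; field.
Qed.

End DAlembert.

Section ZpPeriodic.
Variables (V : zmodType) (p' : nat).
Local Notation p := p'.+2.

Lemma Zp_periodic_const (f : 'I_p -> V) k :
  coprime p k -> periodic f k%:R -> forall w, f w = f 0.
Proof.
move=> cop_pk per.
have per1 : periodic f 1.
  have unit_k : (k%:R : 'I_p) \is a GRing.unit by rewrite (@unitZpE p k isT).
  have -> : (1 : 'I_p) = k%:R *+ (k%:R^-1 : 'I_p).
    by rewrite -mulr_natr natr_Zp mulrV.
  exact: periodicn per _.
by move=> w; rewrite -(periodicn per1 w 0) add0r natr_Zp.
Qed.

Lemma sum_Zp_add (f : 'I_p -> V) s : \sum_(w : 'I_p) f (w + s) = \sum_(w : 'I_p) f w.
Proof. by rewrite [RHS](reindex_inj (addIr s)). Qed.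

End ZpPeriodic.

Section NeumannWave.
Variables (R : realType) (m' : nat).
Local Notation m := m'.+2.

Lemma neumann_wave_const (G : 'I_m -> nat -> R) N :
  odd m -> coprime m N.+1 ->
  (forall u, 2 * G u 1 = G (u + 1) 0 + G (u - 1) 0) ->
  (forall u k, (k.+2 <= N.+1)%N -> G u k.+2 + G u k = G (u + 1) k.+1 + G (u - 1) k.+1) ->
  (forall u, 2 * G u N = G (u + 1) N.+1 + G (u - 1) N.+1) ->
  forall u k, (k <= N.+1)%N -> G u k = G 0 0.
Proof.
move=> m_odd cop wave_start wave_inner wave_end.
have dA := dalembert wave_start wave_inner.
pose phi u := G u 0.
pose psi w := phi (w + N.+1%:R) - phi (w - N.+1%:R).
have psi_pm u : psi (u + 1) = psi (u - 1).
  rewrite /psi /phi; have := wave_end u; rewrite dA ?(dA N.+1) // ?leqnSn //.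
  have -> : u + 1 - N.+1%:R = u - N%:R by rewrite -natr1; ring.
  have -> : u - 1 + N.+1%:R = u + N%:R by rewrite -natr1; ring.
  lra.
have psi_const : forall w, psi w = psi 0.
  apply: (Zp_periodic_const (k := 2)); first by rewrite coprimen2.
  by move=> w; rewrite (_ : 2%:R = 1 + 1) // addrA psi_pm addrK.
have psi0 : psi 0 = 0.
  have : \sum_(w : 'I_m) psi w = 0.
    by rewrite sumrB (sum_Zp_add phi) (sum_Zp_add phi (- _)) subrr.
  rewrite (eq_bigr _ (fun w _ => psi_const w)) sumr_const card_ord.
  by move/eqP; rewrite mulrn_eq0 => /eqP.
have phi_const : forall w, G w 0 = G 0 0.
  apply: (Zp_periodic_const (f := phi) (k := (N.+1 * 2)%N)).
    by rewrite coprimeMr cop coprimen2.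
  move=> w; have /eqP := psi_const (w + N.+1%:R); rewrite psi0 subr_eq0 addrK => /eqP <-.
  by rewrite natrM mulr_natr mulr2n addrA.
by move=> u k kN; rewrite dA // !phi_const; field.
Qed.

End NeumannWave.

Section CosineWave.
Variables (R : realType) (d : nat).

Definition cos_wave (x : R) : R := cos (pi *+ 2 / d%:R * x).

Lemma cos_wave0 : cos_wave 0 = 1.
Proof. by rewrite /cos_wave mulr0 cos0. Qed.

Lemma cos_waveN x : cos_wave (- x) = cos_wave x.
Proof. by rewrite /cos_wave mulrN cosN. Qed.

Lemma cos_wave_le1 x : `|cos_wave x| <= 1.
Proof. exact: cos_max. Qed.

Lemma cos_waveDB x : cos_wave (x + 1) + cos_wave (x - 1) = 2 * cos_wave 1 * cos_wave x.
Proof. by rewrite /cos_wave mulrDr mulrBr mulr1 cosD cosB; ring. Qed.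

Hypothesis d_gt0 : (0 < d)%N.

Lemma cos_waveD_dvd x M : (d %| M)%N -> cos_wave (x + M%:R) = cos_wave x.
Proof.
move=> /dvdnP [q ->]; rewrite /cos_wave mulrDr.
have -> : (pi : R) *+ 2 / d%:R * (q * d)%N%:R = pi *+ 2 *+ q.
  by rewrite natrM -mulr_natr; field; rewrite pnatr_eq0 -lt0n.
exact: (periodicn (@cosD2pi R)).
Qed.

Lemma cos_wave_modn k M : (d %| M)%N -> cos_wave (k %% M)%:R = cos_wave k%:R.
Proof.
move=> dM; rewrite {2}(divn_eq k M) natrD addrC cos_waveD_dvd //.
exact: dvdn_mull.
Qed.

End CosineWave.

Lemma cos_wave1_lt1 (R : realType) d : (3 <= d)%N -> `|cos_wave d 1 : R| < 1.
Proof.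
move=> d_ge3; have d_gt0 : (0 < d)%N by apply: leq_trans d_ge3.
have angle_gt0 : 0 < (pi : R) *+ 2 / d%:R.
  by rewrite divr_gt0 ?ltr0n // mulrn_wgt0 // pi_gt0.
have angle_ltpi : (pi : R) *+ 2 / d%:R < pi.
  by rewrite ltr_pdivrMr ?ltr0n // -[_ *+ 2]mulr_natr ltr_pM2l ?pi_gt0 // ltr_nat.
rewrite lt_neqAle cos_wave_le1 andbT; apply/negP => /eqP /cos1sin0.
by rewrite /cos_wave mulr1 => /eqP; rewrite gt_eqF // sin_gt0_pi // angle_gt0.
Qed.

Section CosineEigenfunctions.
Variables (R : realType) (d : nat).
Hypothesis d_gt0 : (0 < d)%N.

Lemma cycle_cos_eigenfun m' : (d %| m'.+3)%N ->
  eigenfun (cycle_w R m'.+3) (cos_wave d 1) (fun u => cos_wave d (val u)%:R).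
Proof.
have valS (x : 'I_m'.+3) : val (x + 1) = ((x + 1) %% m'.+3)%N.
  by rewrite /= modnDmr.
move=> dm u; have [w ->] : exists w, u = w + 1 by exists (u - 1); rewrite subrK.
rewrite sum_cycle_w_mul deg_cycle_w addrK !valS modnDml !cos_wave_modn //.
rewrite (natrD _ (w + 1)%N) (natrD _ w 1).
have := cos_waveDB d (w%:R + 1 : R); rewrite addrK => ->.
by field; rewrite -natrD pnatr_eq0.
Qed.

Lemma path_cos_eigenfun N : (d %| N.+1)%N ->
  eigenfun (path_w R N.+2) (cos_wave d 1) (fun i => cos_wave d (val i)%:R).
Proof.
move=> dN i; rewrite (sum_path_w_mul i (fun k => cos_wave d k%:R)) deg_path_w.
case: i => [[|i] lt_iN] /=; first by rewrite cos_wave0; ring.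
have e1 : (i.+2%:R : R) = i.+1%:R + 1 by rewrite natr1.
have e2 : (i%:R : R) = i.+1%:R - 1 by rewrite -natr1 addrK.
case: ltnP => [_ | le_Ni] /=; first by rewrite e1 e2 !mul1r cos_waveDB; ring.
have -> : i = N by lia.
have -> : cos_wave d N.+1%:R = 1 :> R by rewrite -[_%:R]add0r cos_waveD_dvd ?cos_wave0.
have -> : cos_wave d N%:R = cos_wave d 1 :> R.
  rewrite (_ : N%:R = -1 + N.+1%:R :> R) ?cos_waveD_dvd ?cos_waveN //.
  by rewrite -natr1 addrCA addNr addr0.
by rewrite mul0r add0r; ring.
Qed.

End CosineEigenfunctions.

Section CyclePath.
Variables (R : realType) (m' N : nat).
Local Notation m := m'.+3.
Local Notation a := (cycle_w R m).
Local Notation b := (path_w R N.+2).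

Lemma deg_path_w_neq0 (v : 'I_N.+2) : deg b v != 0.
Proof. by rewrite gt_eqF // deg_path_w_gt0. Qed.

Lemma cycle_path_not_strongly_disjoint_of_even : ~~ odd m -> ~ strongly_disjoint a b.
Proof.
move=> m_even.
have signS k : (-1) ^+ k.+1 = - (-1) ^+ k :> R by rewrite exprS mulN1r.
have sign_cycle (i : 'I_m) : (-1) ^+ nat_of_ord (i + 1)%R = - (-1) ^+ i :> R.
  by rewrite -signr_odd /= modnDmr odd_mod ?(negbTE m_even) // signr_odd addn1 signS.
apply: (not_strongly_disjoint_of_signs (@cycle_w_sym R m) (@path_w_sym R N.+2)
  (sum_deg_cycle_w R m') (sum_deg_path_w R (isT : 2 <= N.+2)%N)
  (@cycle_w_ge0 R m) (@path_w_ge0 R N.+2)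
  (chiU := fun u : 'I_m => (-1) ^+ u) (chiV := fun v : 'I_N.+2 => (-1) ^+ v)
  (u0 := ord0) (v0 := ord0)).
- by move=> u; rewrite normr_sign.
- by move=> v; rewrite normr_sign.
- move=> u u' /cycle_w_neq0 /orP [] /eqP ->; first exact: sign_cycle.
  by rewrite -{2}(subrK 1 u) sign_cycle opprK.
- by move=> v v' /path_w_neq0 [] ->; rewrite signS ?opprK.
- by rewrite mulr1 oner_eq0.
- exact: deg_cycle_w_neq0.
- exact: deg_path_w_neq0.
Qed.

Lemma cycle_path_not_strongly_disjoint_of_dvd d :
  (3 <= d)%N -> (d %| m)%N -> (d %| N.+1)%N -> ~ strongly_disjoint a b.
Proof.
move=> d_ge3 dm dN; have d_gt0 : (0 < d)%N by apply: leq_trans d_ge3.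
apply: (not_strongly_disjoint_of_eigenfuns (@cycle_w_sym R m) (@path_w_sym R N.+2)
  (sum_deg_cycle_w R m') (sum_deg_path_w R (isT : 2 <= N.+2)%N)
  (@cycle_w_ge0 R m) (@path_w_ge0 R N.+2) _ _ (cos_wave1_lt1 R d_ge3)
  (cycle_cos_eigenfun R d_gt0 dm) (path_cos_eigenfun R d_gt0 dN)
  (u0 := ord0) (v0 := ord0)).
- by move=> u; apply: cos_wave_le1.
- by move=> v; apply: cos_wave_le1.
- by rewrite /= cos_wave0 mulr1 oner_eq0.
- exact: deg_cycle_w_neq0.
- exact: deg_path_w_neq0.
Qed.

Section JoiningProfile.
Variable g : 'I_m * 'I_N.+2 -> 'I_m * 'I_N.+2 -> R.
Hypothesis gJ : weight_joining a b g.

Definition joining_profile (u : 'I_m) (k : nat) : R := deg g (u, inord k) / deg b (inord k).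
Local Notation G := joining_profile.

Lemma joining_profile_wave u (k : 'I_N.+2) :
  (k.+1 < N.+2)%:R * G u k.+1 + (0 < k)%:R * G u k.-1 =
  ((k.+1 < N.+2)%:R + (0 < k)%:R) / 2 * (G (u + 1) k + G (u - 1) k).
Proof.
have := joining_deg_balance (@cycle_w_sym R m) (@path_w_sym R N.+2) gJ
  (@deg_cycle_w_neq0 R m') deg_path_w_neq0 u k.
rewrite (eq_bigr (fun v => b k v * G u v)); last by move=> v _; rewrite /G inord_val.
have dg x : deg g (x, k) = G x k * deg b k by rewrite /G inord_val divfK ?deg_path_w_neq0.
rewrite sum_path_w_mul sum_cycle_w_mul !deg_cycle_w !dg deg_path_w => e.
have c_neq0 : (2 * (N.+2 - 1)%:R : R)^-1 != 0 by rewrite invr_eq0 mulf_neq0 ?pnatr_eq0.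
by apply: (mulfI c_neq0); rewrite e; field; rewrite -natrD !pnatr_eq0.
Qed.

Lemma joining_profile_const : odd m -> coprime m N.+1 ->
  forall u (v : 'I_N.+2), G u v = G 0 0.
Proof.
move=> m_odd cop u v.
apply: (neumann_wave_const (m' := m'.+1) (N := N)) => //; last by rewrite -ltnS.
- move=> w; have := joining_profile_wave w ord0.
  by rewrite /= mul0r !addr0 !mul1r => ->; field.
- move=> w k k_le; have := joining_profile_wave w (inord k.+1).
  by rewrite inordK ?(leqW k_le) //= ltnS k_le /= !mul1r => ->; field.
- move=> w; have := joining_profile_wave w ord_max.
  by rewrite /= ltnn mul0r !add0r !mul1r => ->; field.
Qed.

Lemma joining_deg_product : odd m -> coprime m N.+1 ->
  forall u v, deg g (u, v) = deg a u * deg b v.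
Proof.
move=> m_odd cop.
have degG u v : deg g (u, v) = G 0 0 * deg b v.
  by rewrite -(joining_profile_const m_odd cop u v) /G inord_val divfK ?deg_path_w_neq0.
have G00 : G 0 0 = (m%:R)^-1.
  have := gJ.2.2.1 ord0; under eq_bigr do rewrite degG.
  rewrite sumr_const card_ord => sum_deg.
  have m_neq0 : m%:R != 0 :> R by rewrite pnatr_eq0.
  apply: (mulIf (deg_path_w_neq0 ord0)); apply: (mulIf m_neq0).
  by rewrite [LHS]mulr_natr sum_deg mulrAC mulVf ?mul1r.
by move=> u v; rewrite degG G00 deg_cycle_w.
Qed.

End JoiningProfile.

Lemma cycle_path_strongly_disjoint : odd m -> coprime m N.+1 -> strongly_disjoint a b.
Proof.
move=> m_odd cop g gJ.
apply: (joining_eq_product (@cycle_w_sym R m) (@path_w_sym R N.+2) gJ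
  (@deg_cycle_w_neq0 R m') deg_path_w_neq0 (joining_deg_product gJ m_odd cop) _ val_inj).
exact: path_w_neq0.
Qed.

End CyclePath.

Theorem proposition3p6 (R : realType) (m n : nat) :
  (3 <= m)%N -> (2 <= n)%N ->
  (strongly_disjoint (cycle_w R m) (path_w R n) <->
   odd m /\ gcdn m (n - 1) = 1%N).
Proof.
case: m => [|[|[|m']]] // _; case: n => [|[|N]] // _; rewrite subSS subn0.
split=> [SD | [m_odd /eqP cop]]; last exact: cycle_path_strongly_disjoint.
have m_odd : odd m'.+3.
  by apply: contraT => m_even; case: (cycle_path_not_strongly_disjoint_of_even m_even SD).
split=> //; apply/eqP/negPn/negP => gcd_neq1.
have gcd_odd : ~~ (2 %| gcdn m'.+3 N.+1)%N.
  by apply: contraL m_odd => /dvdn_trans /(_ (dvdn_gcdl _ _)); rewrite dvdn2.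
have gcd_ge3 : (3 <= gcdn m'.+3 N.+1)%N.
  by move: gcd_neq1 gcd_odd (gcdn_gt0 m'.+3 N.+1); case: gcdn => [|[|[]]].
exact: (cycle_path_not_strongly_disjoint_of_dvd gcd_ge3 (dvdn_gcdl _ _) (dvdn_gcdr _ _) SD).
Qed.
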